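(* Let $(V,\tau)$ be a topological mixed lattice space. (a) The map $Q:V\to V_p$, $Q(x)={}^ux$, is continuous and satisfies: $Q(V)=V_p$ and $Q(x)=x$ for all $x\in V_p$; $Q(tx)=tQ(x)$ for all $t\ge 0$, $x\in V$; $Q(x+y)\le Q(x)+Q(y)$ for all $x,y$; $Q(x)=0$ and $Q(-x)=0$ imply $x=0$; and $Q(x-Q(x))=0$ for all $x$. That is, $Q$ is a proper asymmetric cone norm with respect to the cone $V_p$. (b) The map $Q:V\to V_{sp}$, $Q(x)=x^u$, is continuous and satisfies: $Q(V)=V_{sp}$ and $Q(x)=x$ for all $x\in V_{sp}$; $Q(tx)=tQ(x)$ for all $t\ge0$; $Q(x+y)\le Q(x)+Q(y)$ for all $x,y$; $Q(x)=0$ and $Q(-x)=0$ imply $x=0$; $Q(x-Q(x))=0$ for all $x$. Moreover $Q$ is increasing for both orderings: $x\preccurlyeq y$ implies $Q(x)\preccurlyeq Q(y)$, and $x\le y$ implies $Q(x)\le Q(y)$.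
   Context: A mixed lattice vector space $(V,\le,\preccurlyeq)$ is a real vector space $V$ with two partial orderings $\le$ (initial order) and $\preccurlyeq$ (specific order), each making $V$ a partially ordered vector space, with positive cones $V_p=\{x:0\le x\}$, $V_{sp}=\{x:0\preccurlyeq x\}$, such that: (1) for all $x,y$ the elements $x\curlyvee y=\min\{w: w\succcurlyeq x,\ w\ge y\}$ and $x\curlywedge y=\max\{w: w\preccurlyeq x,\ w\le y\}$ exist (min/max with respect to $\le$); (2) $x\preccurlyeq y$ implies $x\le y$; (3) $x\curlyvee y, x\curlywedge y\in V_{sp}$ whenever $x,y\in V_{sp}$. A topological mixed lattice space is such a $V$ with a vector topology making $(x,y)\mapsto x\curlyvee y$ and $(x,y)\mapsto x\curlywedge y$ continuous. Notation: $x^u=0\curlyvee x$, ${}^ux=x\curlyvee 0$. Given a cone $C$ in a topological vector space $X$ with associated order $\le_C$, a continuous map $Q:X\to C$ is an asymmetric cone norm if $Q(x)=x$ for $x\in C$ and $Q(X)=C$; $Q(tx)=tQ(x)$ for $t\ge 0$; $Q(x+y)\le_C Q(x)+Q(y)$; and $Q(x)=Q(-x)=0$ implies $x=0$. It is proper if $Q(x-Q(x))=0$ for all $x$. *)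

From HB Require Import structures.
From mathcomp Require Import all_boot all_order all_algebra.
From mathcomp Require Import all_classical all_reals all_analysis.
Set Implicit Arguments. Unset Strict Implicit. Unset Printing Implicit Defensive.
Import Order.TTheory GRing.Theory Num.Theory.
Local Open Scope classical_set_scope.
Local Open Scope ring_scope.

Definition pove (R : realType) (V : lmodType R) (le : V -> V -> Prop) : Prop :=
  [/\ (forall x, le x x),
      (forall x y, le x y -> le y x -> x = y),
      (forall x y z, le x y -> le y z -> le x z),
      (forall x y z, le x y -> le (x + z) (y + z)) &
      (forall (t : R) x y, 0 <= t -> le x y -> le (t *: x) (t *: y))].

Definition is_min (V : Type) (le : V -> V -> Prop) (A : set V) (m : V) :=
  A m /\ forall w, A w -> le m w.
Definition is_max (V : Type) (le : V -> V -> Prop) (A : set V) (m : V) :=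
  A m /\ forall w, A w -> le w m.

(* Mixed lattice vector space (V, le, sle), where sup x y = x ⋎ y and
   inf x y = x ⋏ y are the (necessarily unique) mixed envelopes, so the
   existence axiom (1) is expressed by providing them as functions. *)
Definition mixed_lattice_vector_space (R : realType) (V : lmodType R)
  (le sle : V -> V -> Prop) (sup inf : V -> V -> V) : Prop :=
  (pove le /\ pove sle /\
      (forall x y, is_min le [set w | sle x w /\ le y w] (sup x y)) /\
      (forall x y, is_max le [set w | sle w x /\ le w y] (inf x y)) /\
      (forall x y, sle x y -> le x y) /\
      (forall x y, sle 0 x -> sle 0 y -> sle 0 (sup x y) /\ sle 0 (inf x y))).

Definition topological_mixed_lattice_space (R : realType)
  (V : topologicalLmodType R) (le sle : V -> V -> Prop) (sup inf : V -> V -> V)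
  : Prop :=
  [/\ mixed_lattice_vector_space le sle sup inf,
      continuous (fun p : V * V => sup p.1 p.2) &
      continuous (fun p : V * V => inf p.1 p.2)].

Definition cone_le (V : zmodType) (C : set V) (x y : V) : Prop := C (y - x).

Definition asymmetric_cone_norm (R : realType) (X : topologicalLmodType R)
  (C : set X) (Q : X -> X) : Prop :=
  [/\ continuous Q,
      range Q = C, (forall x, C x -> Q x = x),
      (forall (t : R) x, 0 <= t -> Q (t *: x) = t *: Q x) &
      ((forall x y, cone_le C (Q (x + y)) (Q x + Q y)) /\
       (forall x, Q x = 0 -> Q (- x) = 0 -> x = 0))]. 
Definition proper_asymmetric_cone_norm (R : realType) (X : topologicalLmodType R)
  (C : set X) (Q : X -> X) : Prop :=
  asymmetric_cone_norm C Q /\ forall x, Q (x - Q x) = 0.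

From HB Require Import structures.
From mathcomp Require Import all_boot all_order all_algebra.
From mathcomp Require Import all_classical all_reals all_analysis.
Set Implicit Arguments. Unset Strict Implicit. Unset Printing Implicit Defensive.
Import Order.TTheory GRing.Theory Num.Theory.
Local Open Scope classical_set_scope.
Local Open Scope ring_scope.

(* Both maps are partial applications of the envelope [x ⋎ y], so everything
   follows from the characterisation of [x ⋎ y] as the least (for [<=]) upper
   bound of [x] for [≼] and of [y] for [<=]: comparing candidate upper bounds
   gives the fixed points, the homogeneity, the subadditivity and the
   monotonicity; continuity comes from the joint continuity of [⋎].  The only
   genuinely mixed step is [≼]-monotonicity of [x^u]: for [x ≼ y] one shows
   [x^u = y^u ⋏ x^u], using that [⋏] of [≼]-positive elements is [≼]-positive. *)

Section PartiallyOrderedVectorSpace.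
Variables (R : realType) (V : lmodType R) (le : V -> V -> Prop).
Hypothesis le_pove : pove le.

Lemma pove_refl x : le x x.
Proof. by case: le_pove. Qed.

Lemma pove_anti x y : le x y -> le y x -> x = y.
Proof. by case: le_pove => _ anti _ _ _; apply: anti. Qed.

Lemma pove_trans y x z : le x y -> le y z -> le x z.
Proof. by case: le_pove => _ _ trans _ _; apply: trans. Qed.

Lemma pove_addr z x y : le x y -> le (x + z) (y + z).
Proof. by case: le_pove => _ _ _ addr _; apply: addr. Qed.

Lemma pove_scale (t : R) x y : 0 <= t -> le x y -> le (t *: x) (t *: y).
Proof. by case: le_pove => _ _ _ _ scale; apply: scale. Qed.

Lemma pove_add x1 y1 x2 y2 : le x1 y1 -> le x2 y2 -> le (x1 + x2) (y1 + y2).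
Proof.
move=> le1 le2; apply: (pove_trans (y := y1 + x2)); first exact: pove_addr.
by rewrite ![y1 + _]addrC; apply: pove_addr.
Qed.

Lemma pove_subr_ge0 x y : le 0 (y - x) <-> le x y.
Proof.
split=> [|lexy]; last by rewrite -(subrr x); apply: pove_addr.
by move=> /(pove_addr x); rewrite add0r subrK.
Qed.

Lemma pove_subr_le0 x y : le (x - y) 0 <-> le x y.
Proof.
split=> [|lexy]; last by rewrite -(subrr y); apply: pove_addr.
by move=> /(pove_addr y); rewrite add0r subrK.
Qed.

Lemma pove_scaleV (t : R) x y : 0 < t -> le (t *: x) y -> le x (t^-1 *: y).
Proof.
move=> t_gt0 /(@pove_scale t^-1); rewrite scalerA mulVf ?gt_eqF // scale1r.
by apply; rewrite invr_ge0 ltW.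
Qed.

Lemma pove_eq0 x : le x 0 -> le (- x) 0 -> x = 0.
Proof.
move=> le_x0 /(pove_addr x); rewrite addNr add0r => le0x.
exact: pove_anti.
Qed.

End PartiallyOrderedVectorSpace.

Section MixedLatticeVectorSpace.
Variables (R : realType) (V : lmodType R).
Variables (le sle : V -> V -> Prop) (sup inf : V -> V -> V).
Hypothesis mixed : mixed_lattice_vector_space le sle sup inf.

Let le_pove : pove le := proj1 mixed.
Let sle_pove : pove sle := proj1 (proj2 mixed).

Lemma sle_le x y : sle x y -> le x y.
Proof. by case: mixed => _ [_ [_ [_ [sle_le _]]]]; apply: sle_le. Qed.

Lemma sup_sle_l x y : sle x (sup x y).
Proof. by case: mixed => _ [_ [sup_min _]]; case: (sup_min x y) => -[]. Qed.

Lemma sup_le_r x y : le y (sup x y).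
Proof. by case: mixed => _ [_ [sup_min _]]; case: (sup_min x y) => -[]. Qed.

Lemma sup_le_l x y : le x (sup x y).
Proof. exact/sle_le/sup_sle_l. Qed.

Lemma sup_least x y w : sle x w -> le y w -> le (sup x y) w.
Proof.
by case: mixed => _ [_ [sup_min _]] xw yw; case: (sup_min x y) => _; apply.
Qed.

Lemma inf_sle_l x y : sle (inf x y) x.
Proof. by case: mixed => _ [_ [_ [inf_max _]]]; case: (inf_max x y) => -[]. Qed.

Lemma inf_le_r x y : le (inf x y) y.
Proof. by case: mixed => _ [_ [_ [inf_max _]]]; case: (inf_max x y) => -[]. Qed.

Lemma inf_greatest x y w : sle w x -> le w y -> le w (inf x y).
Proof.
by case: mixed => _ [_ [_ [inf_max _]]] wx wy; case: (inf_max x y) => _; apply.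
Qed.

Lemma inf_sle_ge0 x y : sle 0 x -> sle 0 y -> sle 0 (inf x y).
Proof. by case: mixed => _ [_ [_ [_ [_ env_ge0]]]] x0 y0; case: (env_ge0 x y). Qed.

Lemma sup_l x y : le y x -> sup x y = x.
Proof.
move=> yx; apply: (pove_anti le_pove); last exact: sup_le_l.
by apply: sup_least => //; apply: (pove_refl sle_pove).
Qed.

Lemma sup_r x y : sle x y -> sup x y = y.
Proof.
move=> xy; apply: (pove_anti le_pove); last exact: sup_le_r.
by apply: sup_least => //; apply: (pove_refl le_pove).
Qed.

Lemma supxx x : sup x x = x.
Proof. exact/sup_l/(pove_refl le_pove). Qed.

Lemma sup_le_homo x x' y y' : sle x x' -> le y y' -> le (sup x y) (sup x' y').
Proof.
move=> xx' yy'; apply: sup_least.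
- exact: (pove_trans sle_pove xx' (sup_sle_l _ _)).
- exact: (pove_trans le_pove yy' (sup_le_r _ _)).
Qed.

Lemma supD_le x1 y1 x2 y2 :
  le (sup (x1 + x2) (y1 + y2)) (sup x1 y1 + sup x2 y2).
Proof.
by apply: sup_least; [apply: (pove_add sle_pove); apply: sup_sle_l
                     |apply: (pove_add le_pove); apply: sup_le_r].
Qed.

Lemma supZ (t : R) x y : 0 <= t -> sup (t *: x) (t *: y) = t *: sup x y.
Proof.
rewrite le_eqVlt => /predU1P[<-|t_gt0]; first by rewrite !scale0r supxx.
apply: (pove_anti le_pove).
  apply: sup_least.
  - exact: (pove_scale sle_pove (ltW t_gt0) (sup_sle_l x y)).
  - exact: (pove_scale le_pove (ltW t_gt0) (sup_le_r x y)).
rewrite -[sup (t *: x) _](scale1r) -(mulfV (lt0r_neq0 t_gt0)) -scalerA.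
apply: (pove_scale le_pove (ltW t_gt0)).
apply: sup_least.
- exact: (pove_scaleV sle_pove t_gt0 (sup_sle_l _ _)).
- exact: (pove_scaleV le_pove t_gt0 (sup_le_r _ _)).
Qed.

Lemma sup0_sle_inf x y : sle x y -> sup 0 x = inf (sup 0 y) (sup 0 x).
Proof.
move=> xy; set m := sup 0 x; set M := sup 0 y.
have d_sge0 : sle 0 (y - x) by apply/(pove_subr_ge0 sle_pove).
have M_le : le M (m + (y - x)).
  apply: sup_least.
    by rewrite -[0]addr0; apply: (pove_add sle_pove) => //; apply: sup_sle_l.
  apply/(pove_subr_ge0 le_pove); rewrite [y - x]addrC addrA addrK.
  exact/(pove_subr_ge0 le_pove)/sup_le_r.
have lower_le_inf : le (M - (y - x)) (inf M m).
  apply: inf_greatest.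
  - by apply/(pove_subr_ge0 sle_pove); rewrite opprB addrCA subrr addr0.
  - apply/(pove_subr_ge0 le_pove).
    by rewrite opprB addrA; apply/(pove_subr_ge0 le_pove).
apply: (pove_anti le_pove); last exact: inf_le_r.
apply: sup_least; first by apply: inf_sle_ge0; apply: sup_sle_l.
apply: (pove_trans le_pove) lower_le_inf; apply/(pove_subr_ge0 le_pove).
by rewrite opprB addrA addrAC addrK; apply/(pove_subr_ge0 le_pove)/sup_le_r.
Qed.

Lemma sup0_sle_homo x y : sle x y -> sle (sup 0 x) (sup 0 y).
Proof. by move=> /sup0_sle_inf ->; apply: inf_sle_l. Qed.

End MixedLatticeVectorSpace.

Lemma range_retraction (T : Type) (C : set T) (f : T -> T) :
  (forall x, C (f x)) -> (forall x, C x -> f x = x) -> range f = C.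
Proof.
move=> fC fid; apply/seteqP; split=> [_ [x _ <-] //|x Cx].
by exists x; rewrite ?fid.
Qed.

Lemma continuous2_comp (T U W : topologicalType) (op : U -> U -> W)
    (f g : T -> U) :
  continuous (fun p : U * U => op p.1 p.2) -> continuous f -> continuous g ->
  continuous (fun x => op (f x) (g x)).
Proof.
move=> op_cont f_cont g_cont x.
apply: (continuous_comp (f := fun x => (f x, g x))
                        (g := fun p : U * U => op p.1 p.2)).
- by apply: cvg_pair; [apply: f_cont | apply: g_cont].
- exact: op_cont.
Qed.

Lemma supr0_proper_asymmetric_cone_norm (R : realType) (V : topologicalLmodType R)
    (le sle : V -> V -> Prop) (sup inf : V -> V -> V) :
  topological_mixed_lattice_space le sle sup inf ->
  proper_asymmetric_cone_norm [set x | le 0 x] (fun x => sup x 0).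
Proof.
move=> [mixed sup_cont _]; have [le_pove [sle_pove _]] := mixed.
have fix_ge0 x : le 0 x -> sup x 0 = x by apply: (sup_l mixed).
split; last first.
  by move=> x; apply/(sup_r mixed)/(pove_subr_le0 sle_pove)/(sup_sle_l mixed).
split.
- by apply: continuous2_comp => // x; [apply: cvg_id | apply: cvg_cst].
- by apply: range_retraction => // x; apply: (sup_le_r mixed).
- exact: fix_ge0.
- by move=> t x t_ge0; rewrite -(supZ mixed) // scaler0.
split=> [x y|x].
  by apply/(pove_subr_ge0 le_pove); have := supD_le mixed x 0 y 0; rewrite addr0.
move=> supx0 supNx0; apply: (pove_eq0 le_pove).
- by rewrite -supx0; apply: (sup_le_l mixed).
- by rewrite -supNx0; apply: (sup_le_l mixed).
Qed.

Theorem theorem5p2 (R : realType) (V : topologicalLmodType R)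
  (le sle : V -> V -> Prop) (sup inf : V -> V -> V) :
  topological_mixed_lattice_space le sle sup inf ->
  (* (a) Q x = ^u x = x ⋎ 0, cone V_p *)
  proper_asymmetric_cone_norm [set x | le 0 x] (fun x => sup x 0) /\
  (* (b) Q x = x^u = 0 ⋎ x, cone V_sp *)
  (continuous (fun x => sup 0 x) /\
       range (fun x => sup 0 x) = [set x | sle 0 x] /\
       (forall x, sle 0 x -> sup 0 x = x) /\
       (forall (t : R) x, 0 <= t -> sup 0 (t *: x) = t *: sup 0 x) /\
       (forall x y, le (sup 0 (x + y)) (sup 0 x + sup 0 y)) /\
       (forall x, sup 0 x = 0 -> sup 0 (- x) = 0 -> x = 0) /\
       (forall x, sup 0 (x - sup 0 x) = 0) /\
       (forall x y, sle x y -> sle (sup 0 x) (sup 0 y)) /\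
       (forall x y, le x y -> le (sup 0 x) (sup 0 y))).
Proof.
move=> tmls; split; first exact: (supr0_proper_asymmetric_cone_norm tmls).
case: tmls => mixed sup_cont _; have [le_pove [sle_pove _]] := mixed.
split; first by apply: continuous2_comp => // x; [apply: cvg_cst | apply: cvg_id].
split.
  by apply: range_retraction => x; [apply: (sup_sle_l mixed) | apply: (sup_r mixed)].
split; first by move=> x; apply: (sup_r mixed).
split; first by move=> t x t_ge0; rewrite -(supZ mixed) // scaler0.
split; first by move=> x y; have := supD_le mixed 0 x 0 y; rewrite addr0.
split.
  move=> x supx0 supNx0; apply: (pove_eq0 le_pove).
  - by rewrite -supx0; apply: (sup_le_r mixed).
  - by rewrite -supNx0; apply: (sup_le_r mixed).
split.
  by move=> x; apply/(sup_l mixed)/(pove_subr_le0 le_pove)/(sup_le_r mixed).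
split; first exact: (sup0_sle_homo mixed).
by move=> x y; apply: (sup_le_homo mixed) => //; apply: (pove_refl sle_pove).
Qed.
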